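(* Let $\mathcal N=(\mathcal V,\mathcal R)$ be a non-autocatalytic reaction network on $n$ species. Let $J(\mathbf x,\mathbf k)$ and $\tilde J(\mathbf x,\mathbf k)$ be the matrices defined in the context, viewed as functions of $\mathbf x\in\mathbb R^n_{>0}$ and $\mathbf k\in\mathbb R^{\mathcal R}_{>0}$. Suppose that for every choice of $\mathbf k>\mathbf 0$ and every positive equilibrium $\mathbf x\in\mathbb R^n_{>0}$ of the mass action system $\mathcal N_{\mathbf k}$, we have $\det J(\mathbf x,\mathbf k)\neq 0$, $\tilde J(\mathbf x,\mathbf k)_{ii}<0$ for all $i$, and $-\tilde J(\mathbf x,\mathbf k)$ is a $P_0$-matrix. Then $\mathcal N$ is delay stable.
   Context: A reaction network $\mathcal N=(\mathcal V,\mathcal R)$ is a finite directed graph whose vertices (complexes) are vectors $\mathbf y\in\mathbb R^n_{\ge 0}$; each edge $\mathbf y\to\mathbf y'$ is a reaction. A reaction $\mathbf y\to\mathbf y'$ is autocatalytic if $\mathrm{supp}(\mathbf y)\cap\mathrm{supp}(\mathbf y')\neq\emptyset$ and $y_i'>y_i$ for every $i\in\mathrm{supp}(\mathbf y)\cap\mathrm{supp}(\mathbf y')$; the network is non-autocatalytic if it has none. Write $\mathbf x^{\mathbf y}=\prod_i x_i^{y_i}$. The mass action system $\mathcal N_{\mathbf k}$ is $\dot{\mathbf x}=\sum_{\mathbf y\to\mathbf y'}k_{\mathbf y\to\mathbf y'}\mathbf x^{\mathbf y}(\mathbf y'-\mathbf y)$. Given delays $\boldsymbol\tau\in\mathbb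 R^{\mathcal R}_{\ge0}$ (one per reaction), the delay mass action system $\mathcal N_{\boldsymbol\tau,\mathbf k}$ is $\dot{\mathbf x}(t)=\sum_{\mathbf y\to\mathbf y'}k_{\mathbf y\to\mathbf y'}[\mathbf x(t-\tau_{\mathbf y\to\mathbf y'})]^{\mathbf y}\mathbf y'-\sum_{\mathbf y\to\mathbf y'}k_{\mathbf y\to\mathbf y'}[\mathbf x(t)]^{\mathbf y}\mathbf y$; its positive equilibria coincide with those of $\mathcal N_{\mathbf k}$. Define $n\times n$ matrices (row $j$, column $i$): $(J_\lambda)_{ji}(\mathbf x,\mathbf k,\boldsymbol\tau)=\sum_{\mathbf y\to\mathbf y'}k_{\mathbf y\to\mathbf y'}\mathbf x^{\mathbf y}\frac{y_i}{x_i}\big(y'_je^{-\lambda\tau_{\mathbf y\to\mathbf y'}}-y_j\big)$ for $\lambda\in\mathbb C$; $J_{ji}(\mathbf x,\mathbf k)=\sum_{\mathbf y\to\mathbf y'}k_{\mathbf y\to\mathbf y'}\mathbf x^{\mathbf y}\frac{y_i}{x_i}(y'_j-y_j)$; $\tilde J_{ji}(\mathbf x,\mathbf k)=\sum_{\mathbf y\to\mathbf y'}k_{\mathbf y\to\mathbf y'}\mathbf x^{\mathbf y}\frac{y_i}{x_i}(y'_j+y_j)$ for $j\ne i$ and $\tilde J_{ii}(\mathbf x,\mathbf k)=\sum_{\mathbf y\to\mathbf y'}k_{\mathbf y\to\mathbf y'}\mathbf x^{\mathbf y}\frac{y_i}{x_i}(y'_i-y_i)$. A $P_0$-matrix is a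 real square matrix with all principal minors non-negative. The network $\mathcal N$ is delay stable if for every $\mathbf k\in\mathbb R^{\mathcal R}_{>0}$, every $\boldsymbol\tau\in\mathbb R^{\mathcal R}_{\ge0}$ and every positive equilibrium $\mathbf x^*$ of $\mathcal N_{\boldsymbol\tau,\mathbf k}$, every root $\lambda$ of the characteristic equation $\det(J_\lambda(\mathbf x^*,\mathbf k,\boldsymbol\tau)-\lambda I)=0$ has negative real part. *)

From HB Require Import structures.
From mathcomp Require Import all_boot all_order all_algebra.
From mathcomp Require Import all_classical all_reals all_analysis.
From mathcomp Require Import complex.

Set Implicit Arguments.
Unset Strict Implicit.
Unset Printing Implicit Defensive.

Import Order.TTheory GRing.Theory Num.Theory.
Local Open Scope ring_scope.
Local Open Scope complex_scope.

Section ReactionNetworks.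
Variables (R : realType) (n : nat) (Rc : finType).
(* A reaction network on n species: a finite set Rc of reactions, reaction r
   being the edge  src r -> prd r  between complexes in R^n_{>=0}. *)
Variables (src prd : Rc -> 'I_n -> R).

Definition is_network : Prop :=
  [/\ forall r i, 0 <= src r i, forall r i, 0 <= prd r i,
      forall r, src r <> prd r &
      forall r1 r2, src r1 = src r2 -> prd r1 = prd r2 -> r1 = r2].

Definition autocatalytic (r : Rc) : Prop :=
  (exists i, 0 < src r i /\ 0 < prd r i) /\
  (forall i, 0 < src r i -> 0 < prd r i -> src r i < prd r i).

Definition non_autocatalytic : Prop := forall r, ~ autocatalytic r.

Definition monom (x y : 'I_n -> R) : R := \prod_(i < n) (x i `^ y i).

Definition pos_equilibrium (k : Rc -> R) (x : 'I_n -> R) : Prop :=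
  (forall i, 0 < x i) /\
  (forall j, \sum_(r : Rc) k r * monom x (src r) * (prd r j - src r j) = 0).

Definition Jmx (x : 'I_n -> R) (k : Rc -> R) : 'M[R]_n :=
  \matrix_(j < n, i < n)
    \sum_(r : Rc) k r * monom x (src r) * (src r i / x i) * (prd r j - src r j).

Definition Jtmx (x : 'I_n -> R) (k : Rc -> R) : 'M[R]_n :=
  \matrix_(j < n, i < n)
    if j == i then
      \sum_(r : Rc) k r * monom x (src r) * (src r i / x i) * (prd r i - src r i)
    else
      \sum_(r : Rc) k r * monom x (src r) * (src r i / x i) * (prd r j + src r j).

Definition cexp (z : R[i]) : R[i] :=
  Complex (expR (complex.Re z) * cos (complex.Im z)) (expR (complex.Re z) * sin (complex.Im z)).

Definition Jlam (x : 'I_n -> R) (k tau : Rc -> R) (lam : R[i]) : 'M[R[i]]_n :=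
  \matrix_(j < n, i < n)
    \sum_(r : Rc) ((k r * monom x (src r) * (src r i / x i))%:C *
       ((prd r j)%:C * cexp (- (lam * (tau r)%:C)) - (src r j)%:C))%R.

Definition delay_stable : Prop :=
  forall k : Rc -> R, (forall r, 0 < k r) ->
  forall tau : Rc -> R, (forall r, 0 <= tau r) ->
  forall x, pos_equilibrium k x ->
  forall lam : R[i], \det (Jlam x k tau lam - lam%:M) = 0 -> complex.Re lam < 0.

End ReactionNetworks.

(* P_0-matrix: every principal minor is nonnegative.  A principal submatrix is
   given by a strictly increasing selection f : 'I_m -> 'I_n of indices. *)
Definition P0_matrix (R : realType) (n : nat) (A : 'M[R]_n) : Prop :=
  forall (m : nat) (f : 'I_m -> 'I_n),
    (forall a b : 'I_m, (a < b)%N -> (f a < f b)%N) ->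
    0 <= \det (mxsub f f A).

From HB Require Import structures.
From mathcomp Require Import all_boot all_order all_algebra.
From mathcomp Require Import all_classical all_reals all_analysis.
From mathcomp Require Import complex.
From mathcomp Require Import ring lra.
Import Order.TTheory GRing.Theory Num.Theory.

Set Implicit Arguments.
Unset Strict Implicit.
Unset Printing Implicit Defensive.

Local Open Scope ring_scope.
Local Open Scope complex_scope.

(* Let Re lam >= 0 be a characteristic root. lam = 0 is excluded by det J <> 0.
   Otherwise |exp(-lam tau)| <= 1, so the matrix B := J_lam - lam I satisfies
   |B_ji| <= Jt_ji off the diagonal and, because lam <> 0, |B_ii| > -Jt_ii.
   Hence the real matrix M := -Jt + diag(|B_ii| + Jt_ii) is a Z-matrix, and as
   a P0-matrix plus a positive diagonal it has positive principal minors, i.e.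
   it is a nonsingular M-matrix.  M bounds the comparison matrix of B from
   below, so B is a nonsingular H-matrix: det B <> 0, a contradiction. *)

Lemma homo_ltn_inj m n (f : 'I_m -> 'I_n) :
  {homo f : a b / (a < b)%N} -> injective f.
Proof.
move=> f_homo a b fab; apply/val_inj.
by case: (ltngtP a b) => // /f_homo; rewrite fab ltnn.
Qed.

Lemma homo_ltn_lift n (K : 'I_n.+1) : {homo lift K : a b / (a < b)%N}.
Proof. by move=> a b; rewrite !ltnNge /= leq_bump2. Qed.

Lemma mxsub_add_diag (V : nmodType) m n (f : 'I_m -> 'I_n)
    (A : 'M[V]_n) (d : 'rV[V]_n) :
  injective f -> mxsub f f (A + diag_mx d) = mxsub f f A + diag_mx (colsub f d).
Proof. by move=> f_inj; apply/matrixP => i j; rewrite !mxE (inj_eq f_inj). Qed.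

Lemma P0_matrix_mxsub (R : realType) m n (A : 'M[R]_n) (f : 'I_m -> 'I_n) :
  {homo f : a b / (a < b)%N} -> P0_matrix A -> P0_matrix (mxsub f f A).
Proof.
move=> f_homo A_P0 p g g_homo; rewrite -mxsub_comp.
by apply: A_P0 => a b /g_homo/f_homo.
Qed.

Lemma det_add_delta_mx (R : comNzRingType) n (X : 'M[R]_n) K t :
  \det (X + t *: delta_mx K K) = \det X + t * cofactor X K K.
Proof.
have cofE j : cofactor (X + t *: delta_mx K K) K j = cofactor X K j.
  rewrite /cofactor; congr (_ * \det _); apply/matrixP => a b.
  by rewrite !mxE lift_eqF mulr0 addr0.
rewrite !(expand_det_row _ K); under eq_bigr do rewrite cofE !mxE eqxx mulrDl.
rewrite big_split /=; congr (_ + _).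
rewrite (bigD1 K) //= eqxx mulr1 big1 ?addr0 // => j /negbTE ->.
by rewrite mulr0 mul0r.
Qed.

Lemma det_add_diag_expand (R : comNzRingType) n (A : 'M[R]_n.+1) (d : 'rV[R]_n.+1) K :
  \det (A + diag_mx d) =
    \det (A + diag_mx (\row_i (d 0 i *+ (i != K)))) +
    d 0 K * \det (mxsub (lift K) (lift K) A + diag_mx (colsub (lift K) d)).
Proof.
set d' := \row_i _.
have -> : diag_mx d = diag_mx d' + d 0 K *: delta_mx K K.
  apply/matrixP => i j; rewrite !mxE; case: (eqVneq i j) => [<-|ij].
    by case: (eqVneq i K) => [->|iK] /=; rewrite ?mulr1 ?mulr0 ?add0r ?addr0.
  have -> : (i == K) && (j == K) = false.
    by apply/negbTE; apply: contraNN ij => /andP[/eqP-> /eqP->].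
  by rewrite !mulr0n mulr0 addr0.
rewrite addrA det_add_delta_mx /cofactor -signr_odd addnn odd_double expr0 mul1r.
have -> : row' K (col' K (A + diag_mx d')) = mxsub (lift K) (lift K) (A + diag_mx d').
  by apply/matrixP => i j; rewrite !mxE.
rewrite mxsub_add_diag; last exact: lift_inj.
by congr (_ + _ * \det (_ + diag_mx _)); apply/rowP => i; rewrite !mxE lift_eqF.
Qed.

Lemma det_add_diag_ge_prod (R : realType) m (A : 'M[R]_m) (d : 'rV[R]_m) :
  P0_matrix A -> (forall i, 0 <= d 0 i) -> \prod_i d 0 i <= \det (A + diag_mx d).
Proof.
elim: m A d => [|m IHm] A d A_P0 d_ge0; first by rewrite big_ord0 det_mx00.
suff supp_ind k : forall d : 'rV[R]_m.+1, (forall i, 0 <= d 0 i) ->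
    (forall i : 'I_m.+1, (k <= i)%N -> d 0 i = 0) ->
    \prod_i d 0 i <= \det (A + diag_mx d).
  by apply: (supp_ind m.+1) => // i; rewrite leqNgt ltn_ord.
elim: k => [|k IHk] {}d {}d_ge0 d_supp.
  have -> : d = 0 by apply/rowP => i; rewrite d_supp // mxE.
  rewrite (bigD1 ord0) //= mxE mul0r raddf0 addr0.
  by have := A_P0 _ id (fun a b ab => ab); rewrite mxsub_id.
have [k_lt | k_ge] := ltnP k m.+1; last first.
  by apply: IHk => // i ki; move: (leq_trans k_ge ki); rewrite leqNgt ltn_ord.
pose K := Ordinal k_lt.
rewrite (det_add_diag_expand _ _ K) (bigD1_ord K) //= -[X in X <= _]add0r.
apply: lerD.
  apply: le_trans (IHk _ _ _); first by rewrite (bigD1 K) //= mxE eqxx mul0r.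
    by move=> i; rewrite mxE mulrn_wge0.
  move=> i ki; rewrite mxE; case: (eqVneq i K) => [-> //|iK].
  rewrite d_supp // ltn_neqAle ki andbT.
  by apply: contra iK => /eqP k_eq; apply/eqP/val_inj.
apply: ler_wpM2l; first exact: d_ge0.
rewrite (eq_bigr (fun i => colsub (lift K) d 0 i)) => [|i _]; last by rewrite mxE.
apply: IHm => [|i]; last by rewrite mxE.
exact: P0_matrix_mxsub (homo_ltn_lift K) A_P0.
Qed.

Definition P_matrix (R : numDomainType) n (A : 'M[R]_n) : Prop :=
  forall m (f : 'I_m -> 'I_n), {homo f : a b / (a < b)%N} -> 0 < \det (mxsub f f A).

Lemma P_matrix_add_diag (R : realType) n (A : 'M[R]_n) (d : 'rV[R]_n) :
  P0_matrix A -> (forall i, 0 < d 0 i) -> P_matrix (A + diag_mx d).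
Proof.
move=> A_P0 d_gt0 m f f_homo; rewrite mxsub_add_diag; last exact: homo_ltn_inj.
apply: lt_le_trans (det_add_diag_ge_prod (P0_matrix_mxsub f_homo A_P0) _).
  by apply: prodr_gt0 => i _; rewrite mxE.
by move=> i; rewrite mxE ltW.
Qed.

Section MMatrices.
Variable R : realFieldType.

Definition Z_matrix n (A : 'M[R]_n) : Prop := forall i j, i != j -> A i j <= 0.

Lemma P_matrix_diag_gt0 n (A : 'M[R]_n) i : P_matrix A -> 0 < A i i.
Proof.
move=> A_P; have -> : A i i = \det (@mxsub _ n n 1 1 (fun=> i) (fun=> i) A).
  by rewrite det_mx11 mxE.
by apply: A_P => a b; rewrite !ord1 ltnn.
Qed.

Definition schur_compl n (C : 'M[R]_n.+1) : 'M[R]_n :=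
  \matrix_(i, j) (C (lift 0 i) (lift 0 j) - C (lift 0 i) 0 * C 0 (lift 0 j) / C 0 0).

Lemma det_schur_compl n (C : 'M[R]_n.+1) :
  C 0 0 != 0 -> \det C = C 0 0 * \det (schur_compl C).
Proof.
move=> c_neq0.
pose E : 'M[R]_n.+1 :=
  \matrix_(i, j) (if i == j then 1 else if j == 0 then - (C i 0 / C 0 0) else 0).
have det_E : \det E = 1.
  rewrite det_trig; first by rewrite big1 // => i _; rewrite mxE eqxx.
  apply/is_trig_mxP => i j ij.
  by rewrite mxE -!val_eqE /= ltn_eqF // gtn_eqF // (leq_ltn_trans _ ij).
have EC_lift i j :
    (E *m C) (lift 0 i) j = C (lift 0 i) j - C (lift 0 i) 0 / C 0 0 * C 0 j.
  rewrite !mxE big_ord_recl !mxE lift_eqF eqxx (bigD1 i) //= !mxE eqxx mul1r.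
  rewrite big1 => [|l il]; last first.
    by rewrite !mxE (inj_eq (@lift_inj _ 0)) eq_sym (negbTE il) lift_eqF mul0r.
  by rewrite addr0 mulNr addrC.
have EC_0 j : (E *m C) 0 j = C 0 j.
  rewrite !mxE big_ord_recl !mxE eqxx mul1r big1 ?addr0 // => l _.
  by rewrite !mxE eq_sym lift_eqF mul0r.
rewrite -[LHS]mul1r -det_E -det_mulmx (expand_det_col _ 0) big_ord_recl.
rewrite big1 => [|i _]; last by rewrite EC_lift divfK // subrr mul0r.
rewrite addr0 EC_0 /cofactor addn0 expr0 mul1r; congr (_ * \det _).
by apply/matrixP => i j; rewrite mxE [LHS]mxE EC_lift mxE mulrAC.
Qed.

Lemma Z_matrix_schur_compl n (C : 'M[R]_n.+1) :
  Z_matrix C -> 0 < C 0 0 -> Z_matrix (schur_compl C).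
Proof.
move=> C_Z c_gt0 i j ij; rewrite mxE subr_le0.
apply: le_trans (C_Z _ _ _) _; first by rewrite (inj_eq (@lift_inj _ 0)).
apply: divr_ge0 (ltW c_gt0); apply: mulr_le0; apply: C_Z.
  by rewrite lift_eqF.
by rewrite eq_sym lift_eqF.
Qed.

Lemma P_matrix_schur_compl n (C : 'M[R]_n.+1) : P_matrix C -> P_matrix (schur_compl C).
Proof.
move=> C_P m f f_homo.
pose g (i : 'I_m.+1) := if unlift 0 i is Some j then lift 0 (f j) else 0.
have g_homo : {homo g : a b / (a < b)%N}.
  move=> a b; rewrite /g.
  case: (unliftP 0 a) => [a'|] ->; case: (unliftP 0 b) => [b'|] -> //=.
  by rewrite /bump /= !add1n ltnS => /f_homo.
have g0 : g 0 = 0 by rewrite /g unlift_none.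
have := C_P _ g g_homo; rewrite det_schur_compl; last first.
  by rewrite mxE g0 lt0r_neq0 // P_matrix_diag_gt0.
have -> : schur_compl (mxsub g g C) = mxsub f f (schur_compl C).
  by apply/matrixP => i j; rewrite !mxE /g !liftK unlift_none.
by rewrite mxE g0 pmulr_rgt0 // P_matrix_diag_gt0.
Qed.

Lemma Z_P_matrix_monotone n (C : 'M[R]_n) (u : 'I_n -> R) :
  Z_matrix C -> P_matrix C -> (forall i, \sum_j C i j * u j <= 0) -> forall i, u i <= 0.
Proof.
elim: n C u => [|n IHn] C u C_Z C_P Cu_le0; first by case.
have c_gt0 : 0 < C 0 0 by apply: P_matrix_diag_gt0.
pose rho := \sum_j C 0 (lift 0 j) * u (lift 0 j).
have u0_le : u 0 <= - rho / C 0 0.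
  rewrite ler_pdivlMr // mulrC; have := Cu_le0 0; rewrite big_ord_recl -/rho.
  lra.
(* Eliminating u 0 with row 0 leaves a system of the same kind for the Schur
   complement. *)
have u'_le0 : forall i, u (lift 0 i) <= 0.
  apply: (IHn (schur_compl C));
    [exact: Z_matrix_schur_compl | exact: P_matrix_schur_compl | move=> i].
  have := Cu_le0 (lift 0 i); rewrite big_ord_recl.
  have -> : \sum_j schur_compl C i j * u (lift 0 j) =
      \sum_j C (lift 0 i) (lift 0 j) * u (lift 0 j) + C (lift 0 i) 0 * (- rho / C 0 0).
    rewrite /rho -sumrN !mulr_suml mulr_sumr -big_split /=.
    by apply: eq_bigr => j _; rewrite mxE; field; exact: lt0r_neq0.
  have : C (lift 0 i) 0 * (- rho / C 0 0) <= C (lift 0 i) 0 * u 0.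
    by apply: ler_wnM2l u0_le; apply: C_Z; rewrite lift_eqF.
  lra.
have rho_ge0 : 0 <= rho.
  apply: sumr_ge0 => j _; apply: mulr_le0 (u'_le0 j).
  by apply: C_Z; rewrite eq_sym lift_eqF.
move=> i; case: (unliftP 0 i) => [i'|] -> //.
apply: le_trans u0_le _; rewrite pmulr_lle0 ?invr_gt0 // oppr_le0 //.
Qed.

End MMatrices.

Lemma complex_normc (R : rcfType) (z : R[i]) : (Normc.normc z)%:C = `|z|.
Proof. by case: z => a b; rewrite normc_def. Qed.

Lemma comparison_P_matrix_det_neq0 (R : realType) n (B : 'M[R[i]]_n) (M : 'M[R]_n) :
  P_matrix M ->
  (forall i, (M i i)%:C <= `|B i i|) ->
  (forall i j, i != j -> (M i j)%:C <= - `|B i j|) ->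
  \det B != 0.
Proof.
move=> M_P M_diag M_offdiag; rewrite -det_tr; apply/negP => /det0P[v v_neq0 vB].
pose u j := Normc.normc (v 0 j).
have uE j : (u j)%:C = `|v 0 j| by exact: complex_normc.
have u_ge0 j : 0 <= u j by rewrite -lecR uE normr_ge0.
have M_Z : Z_matrix M.
  by move=> i j ij; rewrite -lecR rmorph0 (le_trans (M_offdiag i j ij)) // oppr_le0.
have Bv_eq0 i : \sum_j B i j * v 0 j = 0.
  transitivity ((v *m B^T) 0 i); last by rewrite vB mxE.
  by rewrite mxE; apply: eq_bigr => j _; rewrite mxE mulrC.
have Mu_le0 i : \sum_j M i j * u j <= 0.
  rewrite -lecR rmorph0 rmorph_sum (bigD1 i) //= rmorphM /= uE.
  under eq_bigr do rewrite rmorphM /= uE.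
  have diag_le : (M i i)%:C * `|v 0 i| <= `|B i i| * `|v 0 i|.
    by apply: ler_wpM2r; [exact: normr_ge0 | exact: M_diag].
  have offdiag_le : \sum_(j | j != i) (M i j)%:C * `|v 0 j| <=
                    - \sum_(j | j != i) `|B i j| * `|v 0 j|.
    rewrite -sumrN; apply: ler_sum => j ji; rewrite -mulNr.
    by apply: ler_wpM2r; [exact: normr_ge0 | apply: M_offdiag; rewrite eq_sym].
  have diag_dominated : `|B i i| * `|v 0 i| <= \sum_(j | j != i) `|B i j| * `|v 0 j|.
    move: (Bv_eq0 i); rewrite (bigD1 i) //= => /eqP; rewrite addr_eq0 => /eqP Bv_i.
    rewrite -normrM Bv_i normrN; under [X in _ <= X]eq_bigr do rewrite -normrM.
    exact: ler_norm_sum.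
  by apply: le_trans (lerD diag_le offdiag_le) _; rewrite subr_le0.
move/negP: v_neq0; apply; apply/eqP/rowP => j; rewrite mxE; apply: Normc.eq0_normc.
by apply/le_anti; rewrite u_ge0 (Z_P_matrix_monotone M_Z M_P Mu_le0).
Qed.

Lemma lt_norm_shift (R : rcfType) (s l : R[i]) (a b : R) :
  `|s| <= a%:C -> 0 <= complex.Re l -> l != 0 -> (b - a)%:C < `|s - b%:C - l|.
Proof.
case: s l => [s1 s2] [l1 l2]; rewrite !normc_def lecR ltcR /= => s_le l1_ge0.
apply: contraNT; rewrite -leNgt subr0 => N_le.
set Ns := Num.sqrt _ in s_le; set N := Num.sqrt _ in N_le.
have Ns_ge0 : 0 <= Ns by exact: sqrtr_ge0.
have N_ge0 : 0 <= N by exact: sqrtr_ge0.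
have Ns2 : Ns ^+ 2 = s1 ^+ 2 + s2 ^+ 2 by rewrite sqr_sqrtr // addr_ge0 ?sqr_ge0.
have N2 : N ^+ 2 = (s1 - b - l1) ^+ 2 + (s2 - l2) ^+ 2.
  by rewrite sqr_sqrtr // addr_ge0 ?sqr_ge0.
have s1_le : s1 <= Ns by have := sqr_ge0 s2; nra.
have s1_ge : b + l1 - s1 <= N by have := sqr_ge0 (s2 - l2); nra.
have l1_eq0 : l1 = 0 by lra.
have s2_eq0 : s2 = 0 by nra.
have l2_eq0 : l2 = 0 by nra.
by rewrite l1_eq0 l2_eq0.
Qed.

Lemma cexp0 (R : realType) : cexp (0 : R[i]) = 1.
Proof. by rewrite /cexp /= expR0 cos0 sin0 !mul1r complexr0; exact: rmorph1. Qed.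

Lemma norm_cexp (R : realType) (z : R[i]) : `|cexp z| = (expR (complex.Re z))%:C.
Proof.
rewrite normc_def /cexp /= !exprMn -mulrDr cos2Dsin2 mulr1 sqrtr_sqr.
by rewrite ger0_norm // ltW // expR_gt0.
Qed.

Lemma norm_delay_term_le (R : rcfType) (c p s : R) (e : R[i]) :
  0 <= c -> 0 <= p -> 0 <= s -> `|e| <= 1 ->
  `|c%:C * (p%:C * e - s%:C)| <= (c * (p + s))%:C.
Proof.
move=> c_ge0 p_ge0 s_ge0 e_le1.
have normC t : 0 <= t -> `|t%:C| = t%:C by move=> t_ge0; rewrite ger0_norm ?ler0c.
rewrite normrM normC // rmorphM rmorphD /=.
apply: ler_wpM2l; first by rewrite ler0c.
apply: le_trans (ler_normB _ _) _; rewrite normrM !normC //.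
by apply: lerD => //; rewrite -[leRHS]mulr1 ler_wpM2l ?ler0c.
Qed.

Section DelayedJacobian.
Variables (R : realType) (n : nat) (Rc : finType) (src prd : Rc -> 'I_n -> R).
Hypotheses (src_ge0 : forall r i, 0 <= src r i) (prd_ge0 : forall r i, 0 <= prd r i).
Variables (x : 'I_n -> R) (k tau : Rc -> R).
Hypotheses (x_gt0 : forall i, 0 < x i) (k_gt0 : forall r, 0 < k r).
Hypothesis tau_ge0 : forall r, 0 <= tau r.

Lemma Jlam0 : Jlam src prd x k tau 0 = map_mx (real_complex R) (Jmx src prd x k).
Proof.
apply/matrixP => j i; rewrite !mxE rmorph_sum; apply: eq_bigr => r _.
by rewrite mul0r oppr0 cexp0 mulr1 -rmorphB -rmorphM.
Qed.

Lemma reaction_weight_ge0 r i : 0 <= k r * monom x (src r) * (src r i / x i).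
Proof.
apply: mulr_ge0; last by apply: divr_ge0; [exact: src_ge0 | exact: ltW].
apply: mulr_ge0; first exact: ltW.
by apply: prodr_ge0 => j _; apply: powR_ge0.
Qed.

Variable lam : R[i].
Hypothesis lam_Re_ge0 : 0 <= complex.Re lam.

Lemma norm_delay_factor_le1 r : `|cexp (- (lam * (tau r)%:C))| <= 1.
Proof.
rewrite norm_cexp -[1]/((1 : R)%:C) lecR expR_le1.
by case: lam lam_Re_ge0 => l1 l2 /= l1_ge0; rewrite mulr0 subr0 oppr_le0 mulr_ge0.
Qed.

Lemma norm_Jlam_offdiag j i :
  j != i -> `|Jlam src prd x k tau lam j i| <= (Jtmx src prd x k j i)%:C.
Proof.
move=> ji; rewrite !mxE (negbTE ji) rmorph_sum.
apply: le_trans (ler_norm_sum _ _ _) _; apply: ler_sum => r _.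
by apply: norm_delay_term_le;
  [exact: reaction_weight_ge0 | exact: prd_ge0 | exact: src_ge0 | exact: norm_delay_factor_le1].
Qed.

Lemma lt_norm_Jlam_diag i :
  lam != 0 -> (- Jtmx src prd x k i i)%:C < `|Jlam src prd x k tau lam i i - lam|.
Proof.
move=> lam_neq0.
pose s := \sum_r ((k r * monom x (src r) * (src r i / x i)) * prd r i)%:C *
                 cexp (- (lam * (tau r)%:C)).
pose a := \sum_r k r * monom x (src r) * (src r i / x i) * prd r i.
pose b := \sum_r k r * monom x (src r) * (src r i / x i) * src r i.
have -> : Jlam src prd x k tau lam i i - lam = s - b%:C - lam.
  congr (_ - _); rewrite mxE /s /b rmorph_sum -sumrB; apply: eq_bigr => r _.
  by rewrite !rmorphM /=; ring.
have -> : Jtmx src prd x k i i = a - b.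
  by rewrite mxE eqxx /a /b -sumrB; apply: eq_bigr => r _; ring.
rewrite opprB; apply: lt_norm_shift => //.
rewrite /s /a rmorph_sum; apply: le_trans (ler_norm_sum _ _ _) _.
apply: ler_sum => r _.
have weight_ge0 : 0 <= k r * monom x (src r) * (src r i / x i) * prd r i.
  by apply: mulr_ge0; [exact: reaction_weight_ge0 | exact: prd_ge0].
rewrite normrM ger0_norm ?ler0c // -[leRHS]mulr1.
by apply: ler_wpM2l; rewrite ?ler0c ?norm_delay_factor_le1.
Qed.

Lemma det_Jlam_neq0 :
  P0_matrix (- Jtmx src prd x k) -> lam != 0 ->
  \det (Jlam src prd x k tau lam - lam%:M) != 0.
Proof.
move=> Jt_P0 lam_neq0; set B := Jlam src prd x k tau lam - lam%:M.
have B_diag i : B i i = Jlam src prd x k tau lam i i - lam by rewrite !mxE eqxx mulr1n.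
have B_offdiag i j : i != j -> B i j = Jlam src prd x k tau lam i j.
  by move=> ij; rewrite !mxE (negbTE ij) mulr0n subr0.
pose D := \row_i (Normc.normc (B i i) + Jtmx src prd x k i i).
apply: (@comparison_P_matrix_det_neq0 _ _ _ (- Jtmx src prd x k + diag_mx D)).
- apply: P_matrix_add_diag Jt_P0 _ => i.
  rewrite mxE -[X in 0 < _ + X]opprK subr_gt0 -ltcR complex_normc B_diag.
  exact (lt_norm_Jlam_diag i lam_neq0).
- move=> i; have -> : (- Jtmx src prd x k + diag_mx D) i i = Normc.normc (B i i).
    by rewrite !mxE eqxx mulr1n addrC addrK.
  by rewrite complex_normc.
- move=> i j ij.
  have -> : (- Jtmx src prd x k + diag_mx D) i j = - Jtmx src prd x k i j.
    by rewrite !mxE (negbTE ij) mulr0n addr0.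
  rewrite rmorphN lerN2 B_offdiag //.
  exact (norm_Jlam_offdiag ij).
Qed.

End DelayedJacobian.

Theorem corollary1 (R : realType) (n : nat) (Rc : finType)
    (src prd : Rc -> 'I_n -> R) :
  is_network src prd ->
  non_autocatalytic src prd ->
  (forall k : Rc -> R, (forall r, 0 < k r) ->
   forall x : 'I_n -> R, pos_equilibrium src prd k x ->
     [/\ \det (Jmx src prd x k) != 0,
         forall i : 'I_n, Jtmx src prd x k i i < 0 &
         P0_matrix (- Jtmx src prd x k)]) ->
  delay_stable src prd.
Proof.
move=> [src_ge0 prd_ge0 _ _] _ hyp k k_gt0 tau tau_ge0 x x_eq lam det_eq0.
have [detJ_neq0 _ Jt_P0] := hyp k k_gt0 x x_eq.
rewrite ltNge; apply/negP => lam_Re_ge0.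
have [lam_eq0 | lam_neq0] := eqVneq lam 0.
  move: det_eq0; rewrite lam_eq0 raddf0 subr0 Jlam0 det_map_mx => /eqP.
  by rewrite fmorph_eq0 (negbTE detJ_neq0).
move/eqP: det_eq0; apply/negP.
exact (det_Jlam_neq0 src_ge0 prd_ge0 (proj1 x_eq) k_gt0 tau_ge0 lam_Re_ge0
         Jt_P0 lam_neq0).
Qed.
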